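(* Let $N\ge2$ and $(b,a)\in\mathcal{M}=\mathbb{R}^N\times\mathbb{R}_{>0}^N$. Then for all $\lambda$ and both choices of sign, \[ \Delta_\lambda(S(b,a))\mp2=(-1)^N\Delta_{-\lambda}(b,a)\mp2, \] and consequently $\dot\Delta_\lambda(S(b,a))=(-1)^{N+1}\dot\Delta_{-\lambda}(b,a)$, where $\dot\Delta_\lambda=\partial_\lambda\Delta_\lambda$, and $\Delta_\lambda^2(S(b,a))-4=\Delta_{-\lambda}^2(b,a)-4$.
   Context: Indices of $(b,a)$ are mod $N$; $S(b,a)=(b',a')$ with $b'_j=-b_{N-j}$, $a'_j=a_{N-j-1}$. For $(b,a)\in\mathcal{M}$, let $y_1(k,\lambda),y_2(k,\lambda)$ be the solutions of $a_{k-1}y(k-1)+b_ky(k)+a_ky(k+1)=\lambda y(k)$ ($k\in\mathbb{Z}$) with $y_1(0)=1,y_1(1)=0,y_2(0)=0,y_2(1)=1$; the discriminant is $\Delta_\lambda(b,a)=y_1(N,\lambda)+y_2(N+1,\lambda)$, a polynomial in $\lambda$ of degree $N$. *)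

From HB Require Import structures.
From mathcomp Require Import all_boot all_order all_algebra.
From mathcomp Require Import reals.
Set Implicit Arguments. Unset Strict Implicit. Unset Printing Implicit Defensive.
Import Order.TTheory GRing.Theory Num.Theory.
Local Open Scope ring_scope.

Definition perent (R : Type) (N : nat) (z : R) (f : 'I_N -> R) (k : nat) : R :=
  match insub (k %% N)%N with Some i => f i | None => z end.

Definition pidx (R : realType) (N : nat) (f : 'I_N -> R) (k : nat) : R :=
  perent 0 f k.

(* jsol N b a y0 y1 k = (y(k), y(k+1)) as polynomials in lambda, where y solves
   a_{k-1} y(k-1) + b_k y(k) + a_k y(k+1) = lambda y(k)  (k >= 1),
   with initial data y(0) = y0, y(1) = y1; indices of b, a taken mod N. *)
Fixpoint jsol (R : realType) (N : nat) (b a : 'I_N -> R) (y0 y1 : {poly R})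
  (k : nat) : {poly R} * {poly R} :=
  match k with
  | 0 => (y0, y1)
  | k'.+1 =>
      let p := jsol b a y0 y1 k' in
      (p.2, (('X - (pidx b k'.+1)%:P) * p.2 - (pidx a k')%:P * p.1)
              * ((pidx a k'.+1)^-1)%:P)
  end.

(* The discriminant Delta_lambda(b,a) = y_1(N,lambda) + y_2(N+1,lambda),
   as a polynomial in lambda. *)
Definition disc (R : realType) (N : nat) (b a : 'I_N -> R) : {poly R} :=
  (jsol b a 1 0 N).1 + (jsol b a 0 1 N).2.

Definition Sb (R : realType) (N : nat) (b : 'I_N -> R) : 'I_N -> R :=
  fun j => - pidx b (N - j).
Definition Sa (R : realType) (N : nat) (a : 'I_N -> R) : 'I_N -> R :=
  fun j => pidx a (N - j - 1).

(* Writing the recurrence as (y(k), y(k+1)) = T_k(lam) (y(k-1), y(k)), the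
   discriminant is the trace of the monodromy T_N(lam) ... T_1(lam).  For
   S(b,a) the transfer matrices are, up to the scalars -a_i/a_{i-1}, the
   transposes of those of (b,a) at -lam, taken in reverse order.  Transposition
   reverses the product back, a cyclic shift (T_0 = T_N) leaves the trace
   unchanged, and the scalars telescope to (-1)^N.  Hence
   Delta_lam(S(b,a)) = (-1)^N Delta_{-lam}(b,a) as polynomials, and the other
   identities follow by differentiating and squaring. *)
From HB Require Import structures.
From mathcomp Require Import all_boot all_order all_algebra.
From mathcomp Require Import reals ring zify.
Set Implicit Arguments.
Unset Strict Implicit.
Unset Printing Implicit Defensive.
Import Order.TTheory GRing.Theory Num.Theory.
Local Open Scope ring_scope.

Section MatrixProducts.
Variables (R : comNzRingType) (m : nat).

Lemma mul_mx2E (A B : 'M[R]_2) i j : (A * B) i j = A i 0 * B 0 j + A i 1 * B 1 j.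
Proof.
rewrite -mulmxE mxE !big_ord_recl big_ord0 addr0.
by congr (A i _ * B _ j + A i _ * B _ j); apply: val_inj.
Qed.

Lemma trmx_prod_rev (X : nat -> 'M[R]_m.+1) n :
  \prod_(i < n) (X i)^T = (\prod_(i < n) X (n - i.+1)%N)^T.
Proof.
elim: n => [|n IH]; first by rewrite !big_ord0 trmx1.
rewrite big_ord_recr IH [in RHS]big_ord_recl /= subn1 -[in RHS]mulmxE trmx_mul mulmxE.
by congr ((_)^T * _); apply: eq_bigr => i _; rewrite subSS.
Qed.

Lemma mxtrace_prod_rot (X : nat -> 'M[R]_m.+1) n : X n = X 0 ->
  \tr (\prod_(i < n) X (n - i.+1)%N) = \tr (\prod_(i < n) X (n - i)%N).
Proof.
case: n => [|n] hX; first by rewrite !big_ord0.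
rewrite big_ord_recr big_ord_recl /= subnn subn0 -!mulmxE mxtrace_mulC hX.
by congr (\tr (_ *m _)); apply: eq_bigr => i _; rewrite subSS.
Qed.

End MatrixProducts.

Lemma poly_eq_horner (R : numDomainType) (p q : {poly R}) :
  (forall x, p.[x] = q.[x]) -> p = q.
Proof.
move=> h; apply/eqP; rewrite -subr_eq0; apply/eqP.
apply: (@roots_geq_poly_eq0 _ _ [seq i%:R | i <- iota 0 (size (p - q))]).
- by apply/allP => x /mapP [i _ ->]; rewrite /root hornerD hornerN h subrr.
- by rewrite map_inj_uniq ?iota_uniq // => i j /eqP; rewrite eqr_nat => /eqP.
- by rewrite size_map size_iota.
Qed.

Section Monodromy.
Variables (R : realType) (N : nat).
Implicit Types (b a f : 'I_N -> R) (lam : R).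

(* Index k - 1 is written k + N - 1 so that k = 0 does not hit truncated
   subtraction; pidx is N-periodic. *)
Definition transfer b a lam (k : nat) : 'M[R]_2 :=
  \matrix_(i < 2, j < 2)
    if (i : nat) == 0%N then (if (j : nat) == 0%N then 0 else 1)
    else if (j : nat) == 0%N then - pidx a (k + N - 1) / pidx a k
    else (lam - pidx b k) / pidx a k.

Definition monodromy b a lam n : 'M[R]_2 := \prod_(i < n) transfer b a lam (n - i).

Lemma monodromyS b a lam n :
  monodromy b a lam n.+1 = transfer b a lam n.+1 * monodromy b a lam n.
Proof. by rewrite /monodromy big_ord_recl subn0. Qed.

Lemma pidxDN f k : pidx f (k + N) = pidx f k.
Proof. by rewrite /pidx /perent modnDr. Qed.

Lemma jsol_horner b a lam y0 y1 k :
  (jsol b a y0 y1 k).1.[lam] =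
    monodromy b a lam k 0 0 * y0.[lam] + monodromy b a lam k 0 1 * y1.[lam] /\
  (jsol b a y0 y1 k).2.[lam] =
    monodromy b a lam k 1 0 * y0.[lam] + monodromy b a lam k 1 1 * y1.[lam].
Proof.
elim: k => [|k [IH1 IH2]]; first by rewrite /monodromy big_ord0 /= !mxE /=; split; ring.
rewrite monodromyS /= !mul_mx2E !mxE /=.
have -> : (k.+1 + N - 1 = k + N)%N by lia.
rewrite pidxDN; split; first by rewrite IH2; ring.
by rewrite !hornerE IH1 IH2; ring.
Qed.

Lemma disc_horner b a lam : (disc b a).[lam] = \tr (monodromy b a lam N).
Proof.
have [h1 _] := jsol_horner b a lam 1 0 N.
have [_ h2] := jsol_horner b a lam 0 1 N.
rewrite /disc hornerD h1 h2 !hornerE /mxtrace !big_ord_recl big_ord0 /= !addr0.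
by congr (monodromy b a lam N _ _ + monodromy b a lam N _ _); apply: val_inj.
Qed.

Lemma transfer_periodic b a lam : transfer b a lam N = transfer b a lam 0.
Proof.
have pidxN f : pidx f N = pidx f 0 by rewrite -(pidxDN f 0) add0n.
rewrite /transfer !pidxN add0n.
have -> : (N + N - 1 = (N - 1) + N)%N by lia.
by rewrite pidxDN.
Qed.

Hypothesis N_gt0 : (0 < N)%N.

Lemma pidxE f k : pidx f k = f (Ordinal (ltn_pmod k N_gt0)).
Proof.
rewrite /pidx /perent; case: insubP => [i _ hi|]; last by rewrite ltn_pmod.
by congr f; apply: val_inj.
Qed.

Lemma pidx_eqmod f m n : (m = n %[mod N])%N -> pidx f m = pidx f n.
Proof. by rewrite /pidx /perent => ->. Qed.

Lemma pidx_Sb b i : (i < N)%N -> pidx (Sb b) (N - i) = - pidx b i.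
Proof.
move=> iN; rewrite pidxE /Sb /=; congr (- _); apply: pidx_eqmod.
case: i iN => [|i] iN; first by rewrite subn0 modnn subn0 modnn mod0n.
by rewrite (modn_small (m := (N - i.+1)%N)) ?subKn ?(ltnW iN) //; lia.
Qed.

Lemma pidx_Sa a i : (i < N)%N -> pidx (Sa a) (N - i) = pidx a (i + N - 1).
Proof.
move=> iN; rewrite pidxE /Sa /=; apply: pidx_eqmod.
case: i iN => [|i] iN; first by rewrite subn0 modnn subn0 add0n.
rewrite (modn_small (m := (N - i.+1)%N)) ?subKn ?(ltnW iN) //; last by lia.
have -> : (i.+1 + N - 1 = i + N)%N by lia.
by rewrite subn1 modnDr.
Qed.

Lemma pidx_Sa_pred a i : (i < N)%N -> pidx (Sa a) (N - i + N - 1) = pidx a i.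
Proof.
move=> iN; rewrite pidxE /Sa /=; apply: pidx_eqmod.
have -> : (N - i + N - 1 = (N - i - 1) + N)%N by lia.
rewrite modnDr (modn_small (m := (N - i - 1)%N)); last by lia.
by have -> : (N - (N - i - 1) - 1 = i)%N by lia.
Qed.

Variable a : 'I_N -> R.
Hypothesis a_neq0 : forall j, a j != 0.

Lemma pidx_neq0 k : pidx a k != 0.
Proof. by rewrite pidxE. Qed.

Lemma transfer_S b lam i : (i < N)%N ->
  transfer (Sb b) (Sa a) lam (N - i) =
  - (pidx a i / pidx a (i + N - 1)) *: (transfer b a (- lam) i)^T.
Proof.
move=> iN; have n1 := pidx_neq0 i; have n2 := pidx_neq0 (i + N - 1).
apply/matrixP => p q; rewrite !mxE pidx_Sb // pidx_Sa // pidx_Sa_pred //.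
by case: p => [[|[|p]] Hp] //; case: q => [[|[|q]] Hq] //=; field; rewrite ?n1 ?n2.
Qed.

Lemma prod_pidx_ratio : \prod_(i < N) (pidx a i / pidx a (i + N - 1)) = 1.
Proof.
pose u k := pidx a (k + N - 1).
have u_unit k : u k \is a GRing.unit by rewrite unitfE pidx_neq0.
have uS k : pidx a k = u k.+1.
  by rewrite /u -[(k.+1 + N - 1)%N]/((k + N).+1 - 1)%N subn1 pidxDN.
have uN : u N = u 0.
  by rewrite /u add0n -addnBA // addnC pidxDN.
rewrite (eq_bigr (fun i : 'I_N => (u i / u i.+1)^-1)); last first.
  by move=> i _; rewrite uS invf_div.
rewrite prodfV -(big_mkord xpredT (fun k => u k / u k.+1)) telescope_prodr //.
by rewrite uN divff ?invr1 // -unitfE.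
Qed.

Lemma disc_S_horner b lam :
  (disc (Sb b) (Sa a)).[lam] = (-1) ^+ N * (disc b a).[- lam].
Proof.
rewrite !disc_horner /monodromy (eq_bigr (fun i : 'I_N =>
  - (pidx a i / pidx a (i + N - 1)) *: (transfer b a (- lam) i)^T)); last first.
  by move=> i _; rewrite transfer_S.
rewrite scaler_prod prodrN card_ord prod_pidx_ratio mulr1 mxtraceZ.
by rewrite trmx_prod_rev mxtrace_tr mxtrace_prod_rot // transfer_periodic.
Qed.

End Monodromy.

Lemma disc_S (R : realType) (N : nat) (b a : 'I_N -> R) :
  (0 < N)%N -> (forall j, a j != 0) ->
  disc (Sb b) (Sa a) = (-1) ^+ N *: (disc b a \Po - 'X).
Proof.
move=> N_gt0 a_neq0; apply: poly_eq_horner => x.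
by rewrite disc_S_horner // hornerZ horner_comp !hornerE.
Qed.

Theorem corollary2p4 (R : realType) (N : nat) (b a : 'I_N -> R) :
  (2 <= N)%N -> (forall j, 0 < a j) ->
  forall lam : R,
  [/\ (disc (Sb b) (Sa a)).[lam] - 2 = (-1) ^+ N * (disc b a).[- lam] - 2,
      (disc (Sb b) (Sa a)).[lam] + 2 = (-1) ^+ N * (disc b a).[- lam] + 2,
      ((disc (Sb b) (Sa a))^`()).[lam] = (-1) ^+ N.+1 * ((disc b a)^`()).[- lam]
    & (disc (Sb b) (Sa a)).[lam] ^+ 2 - 4 = (disc b a).[- lam] ^+ 2 - 4].
Proof.
move=> N_ge2 a_gt0 lam.
have N_gt0 : (0 < N)%N by lia.
have a_neq0 j : a j != 0 by rewrite gt_eqF.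
have disc_SE := disc_S b N_gt0 a_neq0.
have disc_SE_horner : (disc (Sb b) (Sa a)).[lam] = (-1) ^+ N * (disc b a).[- lam].
  by rewrite disc_SE hornerZ horner_comp hornerN hornerX.
split; rewrite ?disc_SE_horner //.
- rewrite disc_SE derivZ deriv_comp derivN derivX hornerZ hornerM horner_comp.
  by rewrite hornerN hornerX hornerN hornerC mulrN1 exprS mulN1r mulNr mulrN.
- have sign_sqr : ((-1) ^+ N) ^+ 2 = 1 :> R.
    by rewrite -exprM mulnC exprM sqrrN !expr1n.
  by rewrite expr2 mulrACA -expr2 sign_sqr mul1r.
Qed.
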